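(* There exists an absolute constant $C_1$ such that, with $\beta=C_1dH\sqrt{\iota}$ and $\iota=\log(4\log(|\mathcal A|)dT/p)$, the following holds for the algorithm below (run with $\lambda=1$ and $\alpha=\frac{\log(|\mathcal A|)K}{2(1+\xi+H)}$). For any fixed policy $\pi$, on the event $\mathcal E$ defined below, for all $(x,a)$, $k\in[K]$, $h\in[H]$ and $j\in\{r,g\}$, $$\langle\phi(x,a),w^k_{j,h}\rangle-Q^\pi_{j,h}(x,a)=\mathbb P_h(V^k_{j,h+1}-V^\pi_{j,h+1})(x,a)+\Delta^k_h(x,a)$$ for some $\Delta^k_h(x,a)$ with $|\Delta^k_h(x,a)|\le\beta\sqrt{\phi(x,a)^\top(\Lambda^k_h)^{-1}\phi(x,a)}$.
   Context: Setting. Consider an episodic constrained MDP with: - a measurable state space $\mathcal S$ and a finite action set $\mathcal A$ with $|\mathcal A|\ge 2$; - horizon $H$ and transition kernels $\mathbb P_h(\cdot|x,a)$; - deterministic reward and utility functions $r_h,g_h:\mathcal S\times\mathcal A\to[0,1]$, with $r_{H+1}=g_{H+1}=0$; - a fixed initial state $x_1$. For a policy $\pi$ and $j\in\{r,g\}$, $V^\pi_{j,h}(x)=\mathbb E_\pi[\sum_{i=h}^Hj_i(x_i,a_i)\mid x_h=x]$ and $Q^\pi_{j,h}(x,a)=\mathbb E_\pi[\sum_{i=h}^Hj_i(x_i,a_i)\mid x_h=x,a_h=a]$, with $V^\pi_{j,H+1}=0$. Write $\mathbb P_hV(x,a)=\mathbb E_{x'\sim\mathbb P_h(\cdot|x,a)}V(x')$.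 Linear MDP assumption: there are - a known feature map $\phi$ into $\mathbb R^d$ with $\|\phi\|_2\le1$; - signed measures $\mu_h=(\mu^1_h,\ldots,\mu^d_h)$; - vectors $\theta_{j,h}$ with $\|\theta_{j,h}\|_2\le\sqrt d$; such that $\mathbb P_h(dx'|x,a)=\langle\phi(x,a),\mu_h(dx')\rangle$ and $j_h=\langle\phi,\theta_{j,h}\rangle$. Moreover $\|\int f\,d\mu_h\|_2\le\sqrt d\sup|f|$. Constraint threshold $b\in(0,H]$. Slater's condition: there exist $\gamma>0$ and $\bar\pi$ with $V^{\bar\pi}_{g,1}(x_1)\ge b+\gamma$. Set $\xi=2H/\gamma$. Algorithm (number of episodes $K$, $T=KH$, parameters $\lambda,\beta,\alpha,\eta>0$). Set $Y_1=0$. In episode $k$: 1. Set $V^k_{j,H+1}=0$. 2. For $h=H,\dots,1$ compute: - $\Lambda^k_h=\sum_{\tau<k}\phi(x^\tau_h,a^\tau_h)\phi(x^\tau_h,a^\tau_h)^\top+\lambda I$; - $w^k_{j,h}=(\Lambda^k_h)^{-1}\sum_{\tau<k}\phi(x^\tau_h,a^\tau_h)[j_h(x^\tau_h,a^\tau_h)+V^k_{j,h+1}(x^\tau_{h+1})]$; - $Q^k_{j,h}(x,a)=\min\{\langle w^k_{j,h},\phi(x,a)\rangle+\beta\sqrt{\phi(x,a)^\top(\Lambda^k_h)^{-1}\phi(x,a)},H\}$; - $\pi_{h,k}(a|x)\propto\exp(\alpha(Q^k_{r,h}(x,a)+Y_kQ^k_{g,h}(x,a)))$; - $V^k_{j,h}(x)=\sum_a\pi_{h,k}(a|x)Q^k_{j,h}(x,a)$.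 3. Execute $\pi_k$ from $x_1$ to obtain $(x^k_h,a^k_h)_h$. 4. Update $Y_{k+1}=\max\{\min\{Y_k+\eta(b-V^k_{g,1}(x_1)),\xi\},0\}$. The event $\mathcal E$: for all $k,h,j$, $$\|\sum_{\tau=1}^{k-1}\phi(x^\tau_h,a^\tau_h)[V^k_{j,h+1}(x^\tau_{h+1})-\mathbb P_hV^k_{j,h+1}(x^\tau_h,a^\tau_h)]\|_{(\Lambda^k_h)^{-1}}\le C_2dH\sqrt{\chi},$$ where $\chi=\log[4(C_1+1)\log(|\mathcal A|)dT/p]$, $C_2$ is a fixed constant, and $\|v\|_M=\sqrt{v^\top Mv}$. *)

From HB Require Import structures.
From mathcomp Require Import all_boot all_order all_algebra.
From mathcomp Require Import all_classical all_reals all_analysis.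
Set Implicit Arguments. Unset Strict Implicit. Unset Printing Implicit Defensive.
Import Order.TTheory GRing.Theory Num.Theory.
Local Open Scope ring_scope.

Section LinearCMDP.
Context {R : realType} {dS : measure_display} {S : measurableType dS}
  {A : finType} {dim : nat}.

Definition dotv (u v : 'cV[R]_dim) : R := (u^T *m v) 0 0.
Definition normv (u : 'cV[R]_dim) : R := Num.sqrt (dotv u u).
Definition mxnorm (M : 'M[R]_dim) (v : 'cV[R]_dim) : R :=
  Num.sqrt ((v^T *m M *m v) 0 0).

(** Transition kernels P_h(.|x,a), h = 1..H. *)
Definition kernel_t := nat -> S -> A -> probability S R.

Definition PV (P : kernel_t) (h : nat) (V : S -> R) (x : S) (a : A) : R :=
  fine (\int[P h x a]_y (V y)%:E)%E.

(** A vector of finite signed measures mu_h = (mu_h^1,...,mu_h^dim), each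
    mu_h^i given by its decomposition mu_h^i = mup h i - mun h i as a
    difference of two finite measures. *)
Definition fmeas_t := nat -> 'I_dim -> {finite_measure set S -> \bar R}.

Definition smeas (mup mun : fmeas_t) (h : nat) (i : 'I_dim) (B : set S) : R :=
  fine (mup h i B) - fine (mun h i B).

Definition sint (mup mun : fmeas_t) (h : nat) (f : S -> R) : 'cV[R]_dim :=
  \col_i (fine (\int[mup h i]_y (f y)%:E)%E - fine (\int[mun h i]_y (f y)%:E)%E).

Definition is_policy (H : nat) (pi : nat -> S -> A -> R) : Prop :=
  forall h, (1 <= h <= H)%N ->
    [/\ (forall x a, 0 <= pi h x a),
        (forall x, \sum_a pi h x a = 1) &
        (forall a, measurable_fun setT (fun x => pi h x a))].

(** Vpol_aux m h = value at step h with m remaining steps. *)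
Fixpoint Vpol_aux (P : kernel_t) (pi : nat -> S -> A -> R)
    (j : nat -> S -> A -> R) (m h : nat) : S -> R :=
  match m with
  | 0 => fun _ => 0
  | m'.+1 => fun x =>
      \sum_a pi h x a * (j h x a + PV P h (Vpol_aux P pi j m' h.+1) x a)
  end.

Definition Vpol P pi j (H h : nat) : S -> R := Vpol_aux P pi j (H.+1 - h) h.
Definition Qpol P pi j (H h : nat) (x : S) (a : A) : R :=
  j h x a + PV P h (Vpol P pi j H h.+1) x a.

Section Algorithm.
Variables (phi : S -> A -> 'cV[R]_dim)
  (rw ut : nat -> S -> A -> R)
  (H : nat) (lam beta alpha eta b xi : R) (x1 : S)
  (xs : nat -> nat -> S) (acts : nat -> nat -> A).
(* xs tau h = x^tau_h, acts tau h = a^tau_h : observed data of episode tau. *)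

Definition feat (tau h : nat) : 'cV[R]_dim := phi (xs tau h) (acts tau h).

Definition Lam (k h : nat) : 'M[R]_dim :=
  \sum_(1 <= tau < k) (feat tau h *m (feat tau h)^T) + lam%:M.

(** w^k_{j,h} computed from the next-step estimate Vn = V^k_{j,h+1}. *)
Definition wvec (j : nat -> S -> A -> R) (k h : nat) (Vn : S -> R)
  : 'cV[R]_dim :=
  invmx (Lam k h) *m
    \sum_(1 <= tau < k)
       ((j h (xs tau h) (acts tau h) + Vn (xs tau h.+1)) *: feat tau h).

Definition bonus (k h : nat) (x : S) (a : A) : R :=
  mxnorm (invmx (Lam k h)) (phi x a).

Definition Qalg j (k h : nat) (Vn : S -> R) (x : S) (a : A) : R :=
  Num.min (dotv (wvec j k h Vn) (phi x a) + beta * bonus k h x a) H%:R.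

Definition softmax (Y : R) (Qr Qg : S -> A -> R) (x : S) (a : A) : R :=
  expR (alpha * (Qr x a + Y * Qg x a)) /
  \sum_b expR (alpha * (Qr x b + Y * Qg x b)).

(** (V^k_{r,h}, V^k_{g,h}) with m = H+1-h remaining steps, for dual var Y. *)
Fixpoint algV_aux (k : nat) (Y : R) (m h : nat) : (S -> R) * (S -> R) :=
  match m with
  | 0 => (fun _ => 0, fun _ => 0)
  | m'.+1 =>
      let Vn := algV_aux k Y m' h.+1 in
      let Qr := Qalg rw k h Vn.1 in
      let Qg := Qalg ut k h Vn.2 in
      let pol := softmax Y Qr Qg in
      (fun x => \sum_a pol x a * Qr x a, fun x => \sum_a pol x a * Qg x a)
  end.

Definition algV (k : nat) (Y : R) (h : nat) := algV_aux k Y (H.+1 - h) h.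

(** Yseq n = Y_{n+1}:  Y_1 = 0,
    Y_{k+1} = max(min(Y_k + eta (b - V^k_{g,1}(x1)), xi), 0). *)
Fixpoint Yseq (n : nat) : R :=
  match n with
  | 0 => 0
  | n'.+1 =>
      Num.max (Num.min (Yseq n' + eta * (b - (algV n'.+1 (Yseq n') 1).2 x1)) xi) 0
  end.

Definition jfun (jr : bool) : nat -> S -> A -> R := if jr then rw else ut.

(** V^k_{j,h} (episode k uses Y_k = Yseq k.-1) *)
Definition Vk (k h : nat) (jr : bool) : S -> R :=
  let V := algV k (Yseq k.-1) h in if jr then V.1 else V.2.

Definition wk (k h : nat) (jr : bool) : 'cV[R]_dim :=
  wvec (jfun jr) k h (Vk k h.+1 jr).

Definition event_E (P : kernel_t) (K : nat) (bound : R) : Prop :=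
  forall k h (jr : bool), (1 <= k <= K)%N -> (1 <= h <= H)%N ->
    mxnorm (invmx (Lam k h))
      (\sum_(1 <= tau < k)
         ((Vk k h.+1 jr (xs tau h.+1)
           - PV P h (Vk k h.+1 jr) (xs tau h) (acts tau h)) *: feat tau h))
    <= bound.

End Algorithm.
End LinearCMDP.

From HB Require Import structures.
From mathcomp Require Import all_boot all_order all_algebra.
From mathcomp Require Import all_classical all_reals all_analysis.
From mathcomp Require Import measurable_realfun ring lra zify.
Import Order.TTheory GRing.Theory Num.Theory.
Local Open Scope ring_scope.

(* For bounded measurable V,
   linearity of the MDP gives j_h + P_h V = <phi, t + s> with t = theta_{j,h} and
   s = int V dmu_h; the signed measures mu_h are handled by moving their negative parts to
   the other side, so that only integrals against nonnegative measures occur. The ridge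
   regression targets j_h + V(x^tau_{h+1}) are therefore <phi^tau, t + s> plus the noise
   controlled by the event E, whence
     w^k_{j,h} = (t + s) - Lambda^-1 (t + s) + Lambda^-1 (sum_tau noise_tau phi^tau).
   Cauchy-Schwarz in the Lambda^-1-norm and Lambda^-1 <= I bound the last two terms by
   ||phi||_{Lambda^-1} (C2 d H sqrt chi + sqrt d (1 + H)), which is at most
   beta ||phi||_{Lambda^-1} for C1 = (2 C2 + 4)^2. That V is measurable with values in
   [0, H] follows by backward induction: the truncated estimates are nonnegative because
   the bonus dominates the error just bounded. *)

Section QuadraticForm.
Context {R : realType} {n : nat}.
Implicit Types (u v w : 'cV[R]_n) (M G : 'M[R]_n).

Definition qform M v : R := (v^T *m M *m v) 0 0.

Definition psdmx M := forall v, 0 <= qform M v.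

Lemma dotvE u v : dotv u v = \sum_i u i 0 * v i 0.
Proof. by rewrite /dotv mxE; apply: eq_bigr => i _; rewrite mxE. Qed.

Lemma dotvC u v : dotv u v = dotv v u.
Proof. by rewrite !dotvE; apply: eq_bigr => i _; rewrite mulrC. Qed.

Lemma dotvDr u v w : dotv u (v + w) = dotv u v + dotv u w.
Proof. by rewrite /dotv mulmxDr mxE. Qed.

Lemma dotvBr u v w : dotv u (v - w) = dotv u v - dotv u w.
Proof. by rewrite /dotv mulmxBr !mxE. Qed.

Lemma dotvv_ge0 v : 0 <= dotv v v.
Proof. by rewrite dotvE sumr_ge0 // => i _; rewrite -expr2 sqr_ge0. Qed.

Lemma dotvv_eq0 v : dotv v v = 0 -> v = 0.
Proof.
rewrite dotvE => /psumr_eq0P v0; apply/matrixP => i j.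
rewrite (ord1 j) mxE; apply/eqP; rewrite -sqrf_eq0 expr2.
by apply/eqP/v0 => // k _; rewrite -expr2 sqr_ge0.
Qed.

Lemma qformE M v : qform M v = dotv v (M *m v).
Proof. by rewrite /qform /dotv mulmxA. Qed.

Lemma qform_sumE M v : qform M v = \sum_i \sum_j v i 0 * M i j * v j 0.
Proof.
rewrite /qform mxE exchange_big; apply: eq_bigr => j _; rewrite mxE big_distrl.
by apply: eq_bigr => i _; rewrite !mxE.
Qed.

Lemma qform1 v : qform 1%:M v = dotv v v.
Proof. by rewrite qformE mul1mx. Qed.

Lemma qformD M G v : qform (M + G) v = qform M v + qform G v.
Proof. by rewrite /qform mulmxDr mulmxDl mxE. Qed.

Lemma qform_sum I (r : seq I) (F : I -> 'M[R]_n) v :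
  qform (\sum_(i <- r) F i) v = \sum_(i <- r) qform (F i) v.
Proof. by rewrite /qform mulmx_sumr mulmx_suml summxE. Qed.

Lemma qform_outer u v : qform (u *m u^T) v = dotv u v ^+ 2.
Proof.
rewrite qformE -mulmxA /dotv mulmxA [X in (X *m _)]mx11_scalar mul_scalar_mx.
by rewrite mxE [(v^T *m u) 0 0](_ : _ = (u^T *m v) 0 0) ?expr2 // -/(dotv v u) dotvC.
Qed.

Lemma qform_mulmx M G v : qform (M *m G) v = dotv (M^T *m v) (G *m v).
Proof. by rewrite /qform /dotv trmx_mul trmxK !mulmxA. Qed.

Lemma bilinear_sym M u v : M^T = M -> (v^T *m M *m u) 0 0 = (u^T *m M *m v) 0 0.
Proof.
move=> sM; have -> : (v^T *m M *m u) 0 0 = (v^T *m M *m u)^T 0 0 by rewrite [RHS]mxE.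
by rewrite !trmx_mul trmxK sM mulmxA.
Qed.

Lemma discriminant_le (a b c : R) : 0 <= c ->
  (forall t, 0 <= a + 2 * t * b + t ^+ 2 * c) -> b ^+ 2 <= a * c.
Proof.
move=> c0; have [->|c_neq0] := eqVneq c 0 => nonneg.
  rewrite mulr0; have [->|b_neq0] := eqVneq b 0; first by rewrite expr0n.
  have := nonneg (- (a + 1) / (2 * b)); rewrite mulr0 addr0.
  have -> : 2 * (- (a + 1) / (2 * b)) * b = - (a + 1) by field; rewrite b_neq0.
  lra.
have c_gt0 : 0 < c by rewrite lt_def c_neq0.
have := nonneg (- b / c); rewrite -(@ler_pM2r _ c) // mul0r.
have -> : (a + 2 * (- b / c) * b + (- b / c) ^+ 2 * c) * c = a * c - b ^+ 2.
  by field; rewrite c_neq0.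
by rewrite subr_ge0.
Qed.

Lemma psd_cauchy_schwarz M u v : M^T = M -> psdmx M ->
  `|dotv u (M *m v)| <= mxnorm M u * mxnorm M v.
Proof.
move=> sM psdM; rewrite /mxnorm -sqrtrM ?psdM //.
rewrite -sqrtr_sqr ler_sqrt ?mulr_ge0 ?psdM // /dotv mulmxA.
apply: discriminant_le => [|t]; first exact: psdM.
have trE : (u + t *: v)^T = u^T + t *: v^T by apply/matrixP => i j; rewrite !mxE.
have := psdM (u + t *: v); rewrite /qform trE !(mulmxDl, mulmxDr).
rewrite -!scalemxAl -!scalemxAr.
have addE (A B : 'M[R]_1) : (A + B) 0 0 = A 0 0 + B 0 0 by rewrite mxE.
have scaleE (A : 'M[R]_1) c : (c *: A) 0 0 = c * A 0 0 by rewrite mxE.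
rewrite !(addE, scaleE) (bilinear_sym M u v sM).
by move=> /le_trans; apply; rewrite le_eqVlt; apply/orP; left; apply/eqP; ring.
Qed.

Definition gram {I : Type} (r : seq I) (F : I -> 'cV[R]_n) : 'M[R]_n :=
  \sum_(i <- r) F i *m (F i)^T.

Lemma gram_sym {I : Type} (r : seq I) F : (gram r F)^T = gram r F.
Proof.
apply/matrixP => i j; rewrite mxE !summxE; apply: eq_bigr => k _.
by rewrite !mxE; apply: eq_bigr => l _; rewrite !mxE mulrC.
Qed.

Lemma gram_psd {I : Type} (r : seq I) F : psdmx (gram r F).
Proof. by move=> v; rewrite qform_sum sumr_ge0 // => i _; rewrite qform_outer sqr_ge0. Qed.

Section Regularized.
Variable G : 'M[R]_n.
Hypotheses (G_sym : G^T = G) (G_psd : psdmx G).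
Let L := G + 1%:M.

Let L_sym : L^T = L.
Proof. by rewrite linearD /= G_sym trmx1. Qed.

Let dotvv_le_qform v : dotv v v <= qform L v.
Proof. by rewrite qformD qform1 lerDr. Qed.

Lemma regularized_unitmx : L \in unitmx.
Proof.
rewrite -row_free_unit; apply: inj_row_free => v vL0.
have Lv0 : L *m v^T = 0 by rewrite -L_sym -trmx_mul vL0 trmx0.
have qv0 : qform L v^T = 0 by rewrite qformE Lv0 /dotv mulmx0 mxE.
apply/trmx_inj; rewrite trmx0; apply: dotvv_eq0; apply/eqP.
by rewrite eq_le dotvv_ge0 -qv0 dotvv_le_qform.
Qed.

Lemma inv_regularized_sym : (invmx L)^T = invmx L.
Proof. by rewrite trmx_inv L_sym. Qed.

Let qform_inv w : qform (invmx L) w = qform L (invmx L *m w).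
Proof.
rewrite /qform trmx_mul inv_regularized_sym mulmxA -(mulmxA _ L).
by rewrite mulmxV ?regularized_unitmx // mulmx1.
Qed.

Lemma inv_regularized_psd : psdmx (invmx L).
Proof.
by move=> w; rewrite qform_inv; apply: le_trans (dotvv_le_qform _); exact: dotvv_ge0.
Qed.

(* With z = L^-1 w: |w|^2 = z^T (G^2 + 2G + 1) z >= z^T (G + 1) z = |w|^2_{L^-1}. *)
Lemma mxnorm_inv_regularized_le w : mxnorm (invmx L) w <= normv w.
Proof.
rewrite ler_sqrt ?dotvv_ge0 // -/(qform _ w) qform_inv.
set z := invmx L *m w.
have -> : w = L *m z by rewrite /z mulKVmx ?regularized_unitmx.
have -> : dotv (L *m z) (L *m z) = qform (L *m L) z by rewrite qform_mulmx L_sym.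
have -> : L *m L = G *m G + G + G + 1%:M.
  by rewrite /L mulmxDl !mulmxDr !mul1mx !mulmx1 !addrA.
rewrite !qformD qform_mulmx G_sym.
have := dotvv_ge0 (G *m z); have := G_psd z; lra.
Qed.

End Regularized.

Lemma ridge_solutionE {I : Type} (r : seq I) (F : I -> 'cV[R]_n) (y e : I -> R) u :
  (forall i, y i = dotv (F i) u + e i) ->
  invmx (gram r F + 1%:M) *m \sum_(i <- r) y i *: F i =
  u - invmx (gram r F + 1%:M) *m u + invmx (gram r F + 1%:M) *m \sum_(i <- r) e i *: F i.
Proof.
move=> yE; set M := invmx _.
have -> : \sum_(i <- r) y i *: F i = gram r F *m u + \sum_(i <- r) e i *: F i.
  rewrite /gram mulmx_suml -big_split /=; apply: eq_bigr => i _.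
  rewrite yE scalerDl -mulmxA [X in F i *m X]mx11_scalar mul_mx_scalar.
  by rewrite /dotv mxE.
rewrite mulmxDr; congr (_ + _).
have -> : gram r F = (gram r F + 1%:M) - 1%:M by rewrite addrK.
rewrite mulmxA mulmxBr mulmx1 mulVmx ?mulmxBl ?mul1mx //.
by apply: regularized_unitmx; [exact: gram_sym | exact: gram_psd].
Qed.

End QuadraticForm.

Section BoundedIntegral.
Context {R : realType} {d : measure_display} {S : measurableType d}.
Variable m : {finite_measure set S -> \bar R}.
Implicit Types (f : S -> R) (M : R).

Lemma integrable_bounded f M : measurable_fun setT f -> (forall x, `|f x| <= M) ->
  m.-integrable setT (EFin \o f).
Proof.
move=> mf fM; apply: measurable_bounded_integrable => //.
  by apply: fin_num_fun_lty; exact: fin_num_measure.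
exists M; split => [|N MN x _]; first exact: num_real.
exact: le_trans (fM x) (ltW MN).
Qed.

Lemma integral_bounded_EFin f M : measurable_fun setT f -> (forall x, `|f x| <= M) ->
  (\int[m]_x (f x)%:E)%E = (\int[m]_x f x)%:E.
Proof.
move=> mf fM; rewrite /Rintegral fineK //.
by apply: integrable_fin_num => //; exact: integrable_bounded mf fM.
Qed.

Lemma RintegralDr_cst f M c : measurable_fun setT f -> (forall x, `|f x| <= M) ->
  \int[m]_x (f x + c) = \int[m]_x f x + c * fine (m setT).
Proof.
move=> mf fM; rewrite RintegralD ?Rintegral_cst //; first exact: integrable_bounded mf fM.
exact: finite_measure_integrable_cst.
Qed.

End BoundedIntegral.

Lemma Rintegral_prob_le {R : realType} {d} {S : measurableType d} (P : probability S R)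
    (f : S -> R) M :
  measurable_fun setT f -> (forall x, 0 <= f x <= M) -> \int[P]_x f x <= M.
Proof.
move=> mf fM.
have fnorm x : `|f x| <= M by have /andP[f0 f1] := fM x; rewrite ger0_norm.
have M0 : 0 <= M by case/andP: (fM point) => f0 f1; apply: le_trans f1.
apply: le_trans (_ : \int[P]_x (cst M x) <= M).
  apply: le_Rintegral => // [||x _]; first exact: integrable_bounded mf fnorm.
    exact: finite_measure_integrable_cst.
  by case/andP: (fM x).
rewrite Rintegral_cst // (_ : fine _ = 1) ?mulr1 //.
by have /(congr1 fine) := probability_setT P.
Qed.

Section MeasureSum.
Context {R : realType} {d : measure_display} {S : measurableType d}.
Local Notation measure := {measure set S -> \bar R}.

Definition measure_sum (s : seq measure) : measure :=
  foldr (fun m1 m2 => measure_add m1 m2 : measure) mzero s.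

Lemma measure_sumE s B : measure_sum s B = (\sum_(m <- s) m B)%E.
Proof.
elim: s => [|m s IH]; first by rewrite big_nil.
by rewrite big_cons -IH; exact: measure_addE.
Qed.

Lemma ge0_integral_measure_sum s (g : S -> \bar R) :
  (forall x, 0 <= g x)%E -> measurable_fun setT g ->
  (\int[measure_sum s]_x g x = \sum_(m <- s) \int[m]_x g x)%E.
Proof.
move=> g0 mg; elim: s => [|m s IH]; first by rewrite big_nil integral_measure_zero.
by rewrite big_cons -IH; exact: ge0_integral_measure_add.
Qed.

End MeasureSum.

Section SignedCombination.
Context {R : realType} {d : measure_display} {S : measurableType d} {n : nat}.
Local Notation fmeasure := {finite_measure set S -> \bar R}.
Variables (P : fmeasure) (mpos mneg : 'I_n -> fmeasure) (c : 'I_n -> R).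
Hypothesis P_comb : forall B, measurable B ->
  P B = (\sum_i c i * (fine (mpos i B) - fine (mneg i B)))%:E.

Let pos_ge0 (x : R) : 0 <= Num.max x 0. Proof. by rewrite le_max lexx orbT. Qed.
Let pos (x : R) : {nonneg R} := NngNum (pos_ge0 x).

Let max0_subN (x : R) : Num.max x 0 - Num.max (- x) 0 = x.
Proof. by rewrite !maxr_absE !subr0 normrN; lra. Qed.

Let sum_scaleE (m : 'I_n -> fmeasure) (k : 'I_n -> R) B : measurable B ->
  (\sum_j (k j)%:E * m j B)%E = (\sum_j k j * fine (m j B))%:E.
Proof.
by move=> mB; rewrite -sumEFin; apply: eq_bigr => j _; rewrite EFinM fineK ?fin_num_measure.
Qed.

Let sc (x : R) (m : fmeasure) : {measure set S -> \bar R} := mscale (pos x) m.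

(* The identity of nonnegative measures
   P + sum_i c_i^- mpos_i + sum_i c_i^+ mneg_i = sum_i c_i^+ mpos_i + sum_i c_i^- mneg_i. *)
Let lhs := measure_sum ((P : {measure set S -> \bar R}) ::
  [seq sc (- c i) (mpos i) | i <- index_enum 'I_n] ++
  [seq sc (c i) (mneg i) | i <- index_enum 'I_n]).
Let rhs := measure_sum ([seq sc (c i) (mpos i) | i <- index_enum 'I_n] ++
                        [seq sc (- c i) (mneg i) | i <- index_enum 'I_n]).

Let lhs_rhs B : measurable B -> lhs B = rhs B.
Proof.
move=> mB; rewrite !measure_sumE big_cons !big_cat !big_map /= P_comb //.
rewrite /mscale /= !sum_scaleE // -!EFinD -!big_split /=; congr EFin.
apply: eq_bigr => j _; rewrite -[in c j * _](max0_subN (c j)); ring.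
Qed.

Section NonnegIntegrand.
Variables (g : S -> R) (M : R).
Hypotheses (mg : measurable_fun setT g) (g_ge0 : forall x, 0 <= g x)
  (g_le : forall x, g x <= M).

Let g_norm x : `|g x| <= M. Proof. by rewrite ger0_norm. Qed.

Let sum_integral_scaleE (m : 'I_n -> fmeasure) (k : 'I_n -> R) :
  (\sum_j \int[sc (k j) (m j)]_x (g x)%:E)%E =
  (\sum_j Num.max (k j) 0 * \int[m j]_x g x)%:E.
Proof.
rewrite -sumEFin; apply: eq_bigr => j _.
rewrite ge0_integral_mscale //; last by move=> x _; rewrite lee_fin.
  by rewrite (integral_bounded_EFin _ _ _ mg g_norm) EFinM.
exact/measurable_EFinP.
Qed.

Lemma Rintegral_signed_comb_ge0 :
  \int[P]_x g x = \sum_i c i * (\int[mpos i]_x g x - \int[mneg i]_x g x).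
Proof.
have := eq_measure_integral rhs (D := setT) (m1 := lhs) (f := EFin \o g)
  (fun B mB _ => lhs_rhs B mB).
have mgE : measurable_fun setT (EFin \o g) by exact/measurable_EFinP.
have gE_ge0 x : (0 <= (EFin \o g) x)%E by rewrite lee_fin.
rewrite !ge0_integral_measure_sum // big_cons !big_cat !big_map /=.
rewrite !sum_integral_scaleE (integral_bounded_EFin _ _ _ mg g_norm) -!EFinD.
move=> [] e.
have -> : \sum_i c i * (\int[mpos i]_x g x - \int[mneg i]_x g x) =
  (\sum_i Num.max (c i) 0 * \int[mpos i]_x g x +
   \sum_i Num.max (- c i) 0 * \int[mneg i]_x g x) -
  (\sum_i Num.max (- c i) 0 * \int[mpos i]_x g x +
   \sum_i Num.max (c i) 0 * \int[mneg i]_x g x).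
  rewrite -!big_split -sumrB; apply: eq_bigr => i _ /=.
  by rewrite -[in LHS](max0_subN (c i)); ring.
lra.
Qed.

End NonnegIntegrand.

Lemma Rintegral_signed_comb (f : S -> R) (M : R) :
  measurable_fun setT f -> (forall x, `|f x| <= M) ->
  \int[P]_x f x = \sum_i c i * (\int[mpos i]_x f x - \int[mneg i]_x f x).
Proof.
move=> mf fM.
have shift_ge0 x : 0 <= f x + M by have := fM x; rewrite ler_norml; lra.
have shift_le x : f x + M <= M + M by have := fM x; rewrite ler_norml; lra.
have mshift : measurable_fun setT (fun x => f x + M).
  by apply: measurable_funD => //; exact: measurable_cst.
have := Rintegral_signed_comb_ge0 _ _ mshift shift_ge0 shift_le.
rewrite !(RintegralDr_cst _ _ _ M mf fM).
under eq_bigr do rewrite !(RintegralDr_cst _ _ _ M mf fM).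
rewrite P_comb //=.
set intf := fun m : fmeasure => \int[m]_x f x.
set mass := fun m : fmeasure => fine (m setT).
have -> : \sum_i c i * (intf (mpos i) + M * mass (mpos i) - (intf (mneg i) + M * mass (mneg i)))
    = \sum_i c i * (intf (mpos i) - intf (mneg i))
      + M * \sum_i c i * (mass (mpos i) - mass (mneg i)).
  by rewrite mulr_sumr -big_split; apply: eq_bigr => i _ /=; ring.
by move=> /addIr.
Qed.

End SignedCombination.

Lemma measurable_funV_gt0 {R : realType} {d} {T : measurableType d} (f : T -> R) :
  measurable_fun setT f -> (forall x, 0 < f x) -> measurable_fun setT (fun x => (f x)^-1).
Proof.
move=> mf f_gt0; rewrite (_ : (fun x => _) = (fun x => expR (- ln (f x)))).
  apply: measurableT_comp => //; apply: measurableT_comp => //.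
  exact: measurableT_comp mf.
by apply/funext => x; rewrite expRN lnK // posrE.
Qed.

Lemma weighted_sum_bounded {R : realType} {I : finType} (w q : I -> R) (B : R) :
  0 <= B -> (forall i, 0 <= w i) -> \sum_i w i <= 1 -> (forall i, 0 <= q i <= B) ->
  0 <= \sum_i w i * q i <= B.
Proof.
move=> B_ge0 w_ge0 w_le1 qB; apply/andP; split.
  by apply: sumr_ge0 => i _; rewrite mulr_ge0 //; case/andP: (qB i).
apply: le_trans (_ : \sum_i w i * B <= _).
  by apply: ler_sum => i _; rewrite ler_wpM2l //; case/andP: (qB i).
by rewrite -mulr_suml ler_piMl.
Qed.

Section LinearMDP.
Context {R : realType} {dS : measure_display} {S : measurableType dS} {A : finType}
  {dim : nat}.
Context {H : nat} {phi : S -> A -> 'cV[R]_dim} {P : @kernel_t R dS S A}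
  {mup mun : @fmeas_t R dS S dim} {rw ut : nat -> S -> A -> R}.
Hypothesis phi_meas : forall a (i : 'I_dim), measurable_fun setT (fun x => phi x a i 0).
Hypothesis P_lin : forall h, (1 <= h <= H)%N -> forall x a (B : set S), measurable B ->
  P h x a B = (dotv (phi x a) (\col_i smeas mup mun h i B))%:E.
Hypothesis rw_ut_01 : forall h, (1 <= h <= H)%N -> forall x a,
  0 <= rw h x a <= 1 /\ 0 <= ut h x a <= 1.
Hypothesis rw_ut_lin : forall h, (1 <= h <= H)%N -> exists th tg : 'cV[R]_dim,
  [/\ normv th <= Num.sqrt dim%:R, normv tg <= Num.sqrt dim%:R &
      forall x a, rw h x a = dotv (phi x a) th /\ ut h x a = dotv (phi x a) tg].

Definition bounded_value (B : R) (V : S -> R) :=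
  measurable_fun setT V /\ forall y, 0 <= V y <= B.

Lemma bounded_value_norm {B V} : bounded_value B V -> forall y, `|V y| <= B.
Proof. by move=> [_ VB] y; case/andP: (VB y) => V0 V1; rewrite ger0_norm. Qed.

Lemma PV_lin h (f : S -> R) (M : R) : (1 <= h <= H)%N ->
  measurable_fun setT f -> (forall y, `|f y| <= M) ->
  forall x a, PV P h f x a = dotv (phi x a) (sint mup mun h f).
Proof.
move=> hH mf fM x a; rewrite dotvE.
under eq_bigr do rewrite mxE.
apply: (Rintegral_signed_comb (P h x a) (mup h) (mun h)) mf fM => B mB.
transitivity (dotv (phi x a) (\col_i smeas mup mun h i B))%:E; first exact: P_lin.
by rewrite dotvE; congr EFin; apply: eq_bigr => i _; rewrite mxE.
Qed.

Lemma PV_ge0 h V x a : (forall y, 0 <= V y) -> 0 <= PV P h V x a.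
Proof. by move=> V_ge0; apply: Rintegral_ge0 => y _. Qed.

Lemma PV_le h B V x a : bounded_value B V -> PV P h V x a <= B.
Proof. by move=> [mV VB]; exact: (Rintegral_prob_le (P h x a) _ _ mV VB). Qed.

Lemma PV_sub h B C V W x a : bounded_value B V -> bounded_value C W ->
  PV P h (fun y => V y - W y) x a = PV P h V x a - PV P h W x a.
Proof.
move=> Vb Wb; have [mV _] := Vb; have [mW _] := Wb.
have iV := integrable_bounded (P h x a) _ _ mV (bounded_value_norm Vb).
have iW := integrable_bounded (P h x a) _ _ mW (bounded_value_norm Wb).
exact: RintegralB _ measurableT iV iW.
Qed.

Lemma jfun_lin jr h : (1 <= h <= H)%N -> exists t : 'cV[R]_dim,
  normv t <= Num.sqrt dim%:R /\ forall y a, jfun rw ut jr h y a = dotv (phi y a) t.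
Proof.
move=> hH; have [th [tg [th_le tg_le thg]]] := rw_ut_lin h hH.
by exists (if jr then th else tg); case: jr; split=> // y a; case: (thg y a).
Qed.

Lemma jfun_01 jr h x a : (1 <= h <= H)%N -> 0 <= jfun rw ut jr h x a <= 1.
Proof. by move=> hH; case: jr; case: (rw_ut_01 h hH x a). Qed.

Lemma measurable_dotv_phi (w : 'cV[R]_dim) a : measurable_fun setT (fun x => dotv w (phi x a)).
Proof.
under eq_fun do rewrite dotvE.
by apply: measurable_sum => i; apply: measurable_funM => //; exact: measurable_cst.
Qed.

Lemma measurable_mxnorm_phi (M : 'M[R]_dim) a :
  measurable_fun setT (fun x => mxnorm M (phi x a)).
Proof.
apply: measurableT_comp; first exact: continuous_measurable_fun (@sqrt_continuous R).
under eq_fun do rewrite -/(qform M _) qform_sumE.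
apply: measurable_sum => i; apply: measurable_sum => j.
by do 2 apply: measurable_funM => //; exact: measurable_cst.
Qed.

Lemma measurable_softmax alpha Y (Qr Qg : S -> A -> R) a :
  (forall a', measurable_fun setT (Qr ^~ a')) -> (forall a', measurable_fun setT (Qg ^~ a')) ->
  measurable_fun setT (fun x => softmax alpha Y Qr Qg x a).
Proof.
move=> mQr mQg.
have mexp a' : measurable_fun setT (fun x => expR (alpha * (Qr x a' + Y * Qg x a'))).
  apply: measurableT_comp => //; apply: measurable_funM; first exact: measurable_cst.
  by apply: measurable_funD => //; apply: measurable_funM => //; exact: measurable_cst.
apply: measurable_funM => //; apply: measurable_funV_gt0; first exact: measurable_sum.
move=> x; rewrite (bigD1 a) //= ltr_pwDl ?expR_gt0 //.
by apply: sumr_ge0 => a' _; exact: expR_ge0.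
Qed.

Lemma softmax_ge0 alpha Y (Qr Qg : S -> A -> R) x a : 0 <= softmax alpha Y Qr Qg x a.
Proof. by rewrite divr_ge0 ?expR_ge0 // sumr_ge0 // => a' _; exact: expR_ge0. Qed.

Lemma sum_softmax_le1 alpha Y (Qr Qg : S -> A -> R) x : \sum_a softmax alpha Y Qr Qg x a <= 1.
Proof.
rewrite -mulr_suml; set Z := \sum_a _.
have [->|Z_neq0] := eqVneq Z 0; first by rewrite mul0r.
by rewrite divff.
Qed.

Context {K : nat} {beta alpha eta b xi : R} {x1 : S} {xs : nat -> nat -> S}
  {acts : nat -> nat -> A} {Eb : R}.
Hypothesis sint_le : forall h, (1 <= h <= H)%N -> forall (f : S -> R) (M : R),
  measurable_fun setT f -> (forall y, `|f y| <= M) ->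
  normv (sint mup mun h f) <= Num.sqrt dim%:R * M.
Hypothesis event : event_E phi rw ut H 1 beta alpha eta b xi x1 xs acts P K Eb.
Hypothesis beta_ge : Eb + Num.sqrt dim%:R * (1 + H%:R) <= beta.

Local Notation Vk := (Vk phi rw ut H 1 beta alpha eta b xi x1 xs acts).
Local Notation wk := (wk phi rw ut H 1 beta alpha eta b xi x1 xs acts).
Local Notation bonus := (bonus phi 1 xs acts).
Local Notation Qalg := (Qalg phi H 1 beta xs acts).

Lemma wk_decomposition {k h jr} : (1 <= k <= K)%N -> (1 <= h <= H)%N ->
  bounded_value H%:R (Vk k h.+1 jr) -> forall x a, exists Delta : R,
    dotv (phi x a) (wk k h jr) = jfun rw ut jr h x a + PV P h (Vk k h.+1 jr) x a + Delta
    /\ `|Delta| <= beta * bonus k h x a.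
Proof.
move=> kK hH Vb x a; set V := Vk k h.+1 jr.
have [t [t_le jE]] := jfun_lin jr h hH.
have [mV _] := Vb; have V_norm := bounded_value_norm Vb.
set s := sint mup mun h V.
have PVE y a' : PV P h V y a' = dotv (phi y a') s := PV_lin _ _ _ hH mV V_norm y a'.
have s_le : normv s <= Num.sqrt dim%:R * H%:R by exact: sint_le.
set F := fun tau => feat phi xs acts tau h.
set e := fun tau => V (xs tau h.+1) - PV P h V (xs tau h) (acts tau h).
set M := invmx (gram (index_iota 1 k) F + 1%:M).
have wE : wk k h jr = t + s - M *m (t + s) + M *m \sum_(1 <= tau < k) e tau *: F tau.
  apply: (ridge_solutionE (index_iota 1 k) F _ e (t + s)) => tau.
  by rewrite /e /F /feat -/V jE PVE dotvDr; ring.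
pose Delta := dotv (phi x a) (M *m \sum_(1 <= tau < k) e tau *: F tau)
  - dotv (phi x a) (M *m t) - dotv (phi x a) (M *m s).
exists Delta; split.
  by rewrite wE dotvDr dotvBr mulmxDr !dotvDr jE PVE /Delta; ring.
have G_sym := gram_sym (index_iota 1 k) F.
have G_psd := gram_psd (index_iota 1 k) F.
have CS v := psd_cauchy_schwarz _ (phi x a) v (inv_regularized_sym _ G_sym)
  (inv_regularized_psd _ G_sym G_psd).
have Mnorm v := mxnorm_inv_regularized_le _ G_sym G_psd v.
have bonus_ge0 : 0 <= bonus k h x a := sqrtr_ge0 _.
have e_le : mxnorm M (\sum_(1 <= tau < k) e tau *: F tau) <= Eb := event k h jr kK hH.
rewrite /Delta; apply: le_trans (ler_normB _ _) _.
apply: le_trans (lerD (ler_normB _ _) (lexx _)) _.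
apply: le_trans (lerD (lerD (CS _) (CS _)) (CS _)) _.
rewrite -!mulrDr mulrC; apply: ler_wpM2r => //; apply: le_trans beta_ge.
have := le_trans (Mnorm t) t_le; have := le_trans (Mnorm s) s_le; lra.
Qed.

Lemma measurable_Qalg jr k h V a :
  measurable_fun setT (fun x => Qalg (jfun rw ut jr) k h V x a).
Proof.
apply: measurable_minr; last exact: measurable_cst.
apply: measurable_funD; first exact: measurable_dotv_phi.
by apply: measurable_funM; [exact: measurable_cst | exact: measurable_mxnorm_phi].
Qed.

Lemma Qalg_bounded {k h jr} : (1 <= k <= K)%N -> (1 <= h <= H)%N ->
  bounded_value H%:R (Vk k h.+1 jr) ->
  forall x a, 0 <= Qalg (jfun rw ut jr) k h (Vk k h.+1 jr) x a <= H%:R.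
Proof.
move=> kK hH Vb x a; have [Delta [wE Delta_le]] := wk_decomposition kK hH Vb x a.
rewrite /Qalg dotvC -/(wk k h jr) wE le_min ge_min lexx orbT andbT ler0n andbT.
have := ler_norm (- Delta); rewrite normrN.
have := PV_ge0 h _ x a (fun y => proj1 (andP (Vb.2 y))).
case/andP: (jfun_01 jr h x a hH); lra.
Qed.

Lemma Vk_end k jr : Vk k H.+1 jr = fun _ => 0.
Proof. by rewrite /Vk /algV subnn; case: jr. Qed.

Lemma Vk_step k h jr : (h <= H)%N ->
  Vk k h jr = fun x => \sum_a
    softmax alpha (Yseq phi rw ut H 1 beta alpha eta b xi x1 xs acts k.-1)
      (Qalg rw k h (Vk k h.+1 true)) (Qalg ut k h (Vk k h.+1 false)) x a *
    Qalg (jfun rw ut jr) k h (Vk k h.+1 jr) x a.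
Proof. by move=> hH; rewrite /Vk /algV subSn // subSS; case: jr. Qed.

Lemma Vk_bounded_value k : (1 <= k <= K)%N ->
  forall h jr, (1 <= h <= H.+1)%N -> bounded_value H%:R (Vk k h jr).
Proof.
move=> kK h jr /andP[h_gt0 hH]; move: jr; move hm : (H.+1 - h)%N => m.
elim: m h h_gt0 hH hm => [|m IH] h h_gt0 hH hm jr.
  have -> : h = H.+1 by lia.
  by rewrite Vk_end; split=> [|y]; [exact: measurable_cst | rewrite lexx ler0n].
have hH' : (1 <= h <= H)%N by apply/andP; split; lia.
have Vb jr' : bounded_value H%:R (Vk k h.+1 jr') by apply: IH; lia.
rewrite Vk_step; last lia.
split=> [|y].
  apply: measurable_sum => a; apply: measurable_funM; last exact: measurable_Qalg.
  by apply: measurable_softmax => a';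
    [exact: (measurable_Qalg true) | exact: (measurable_Qalg false)].
apply: weighted_sum_bounded => [|a||a]; first exact: ler0n.
- exact: softmax_ge0.
- exact: sum_softmax_le1.
- exact: Qalg_bounded.
Qed.

Context {pol : nat -> S -> A -> R}.
Hypothesis pol_policy : is_policy H pol.

Lemma Vpol_end j : Vpol P pol j H H.+1 = fun _ => 0.
Proof. by rewrite /Vpol subnn. Qed.

Lemma Vpol_step j h : (h <= H)%N ->
  Vpol P pol j H h = fun x => \sum_a pol h x a * Qpol P pol j H h x a.
Proof. by move=> hH; rewrite /Vpol subSn // subSS. Qed.

Lemma Qpol_bounded_value jr h n : (1 <= h <= H)%N ->
  bounded_value n%:R (Vpol P pol (jfun rw ut jr) H h.+1) ->
  forall a, bounded_value n.+1%:R (fun x => Qpol P pol (jfun rw ut jr) H h x a).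
Proof.
move=> hH Vb a; have [mV VB] := Vb; have V_norm := bounded_value_norm Vb.
have [t [_ jE]] := jfun_lin jr h hH.
split=> [|x].
  under eq_fun do rewrite /Qpol jE (PV_lin _ _ _ hH mV V_norm) -dotvDr dotvC.
  exact: measurable_dotv_phi.
have := PV_ge0 h _ x a (fun y => proj1 (andP (VB y))).
have := PV_le h _ _ x a Vb; case/andP: (jfun_01 jr h x a hH).
by rewrite /Qpol -natr1; lra.
Qed.

Lemma Vpol_bounded_value jr h : (1 <= h <= H.+1)%N ->
  bounded_value (H.+1 - h)%:R (Vpol P pol (jfun rw ut jr) H h).
Proof.
move=> /andP[h_gt0 hH].
suff Vb m h' : (1 <= h')%N -> (h' + m = H.+1)%N ->
    bounded_value m%:R (Vpol P pol (jfun rw ut jr) H h') by apply: Vb; lia.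
elim: m h' => [|m IH] h' h'_gt0 h'm.
  have -> : h' = H.+1 by lia.
  by rewrite Vpol_end; split=> [|y]; [exact: measurable_cst | rewrite lexx].
have h'H : (1 <= h' <= H)%N by apply/andP; split; lia.
have [pol_ge0 pol_sum pol_meas] := pol_policy h' h'H.
have Qb := Qpol_bounded_value jr _ _ h'H (IH h'.+1 isT (ltac:(lia))).
rewrite Vpol_step; last lia.
split=> [|y].
  by apply: measurable_sum => a; apply: measurable_funM; [exact: pol_meas | exact: (Qb a).1].
by apply: weighted_sum_bounded => // [|a]; [rewrite pol_sum | exact: (Qb a).2].
Qed.

Lemma wk_sub_Qpol x a k h jr : (1 <= k <= K)%N -> (1 <= h <= H)%N ->
  exists Delta : R,
    dotv (phi x a) (wk k h jr) - Qpol P pol (jfun rw ut jr) H h x a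
    = PV P h (fun y => Vk k h.+1 jr y - Vpol P pol (jfun rw ut jr) H h.+1 y) x a + Delta
    /\ `|Delta| <= beta * bonus k h x a.
Proof.
move=> kK hH.
have Vb : bounded_value H%:R (Vk k h.+1 jr) by apply: Vk_bounded_value => //; lia.
have Wb := Vpol_bounded_value jr h.+1 (ltac:(lia)).
have [Delta [wE Delta_le]] := wk_decomposition kK hH Vb x a.
exists Delta; split => //.
rewrite (PV_sub h _ _ _ _ x a Vb Wb) wE /Qpol; ring.
Qed.

End LinearMDP.

Section Constants.
Context {R : realType}.

Lemma ln2_ge_half : 1 / 2 <= ln (2 : R).
Proof. by have := expR_ge1Dx (- ln (2 : R)); rewrite expRN lnK ?posrE //; lra. Qed.

Lemma ln_mul_le (c X : R) : 0 < c -> 2 <= X -> ln (c * X) <= (2 * c + 1) * ln X.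
Proof.
move=> c_gt0 X_ge2; rewrite lnM ?posrE //; last lra.
have := ln_sublinear c_gt0.
have : 1 / 2 <= ln X by apply: le_trans ln2_ge_half _; rewrite ler_ln ?posrE //; lra.
nra.
Qed.

Lemma confidence_ratio_ge2 (nA d T : nat) (p : R) : (2 <= nA)%N -> (0 < d)%N ->
  (0 < T)%N -> 0 < p <= 1 -> 2 <= 4 * ln nA%:R * d%:R * T%:R / p.
Proof.
move=> nA_ge2 d_gt0 T_gt0 /andP[p_gt0 p_le1].
have lnA : 2 <= 4 * ln (nA%:R : R).
  suff : 1 / 2 <= ln (nA%:R : R) by lra.
  by apply: le_trans ln2_ge_half _; rewrite ler_ln ?posrE ?ler_nat ?ltr0n //; lia.
apply: (le_trans lnA); rewrite -mulrA -mulrA; apply: ler_peMr; first lra.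
rewrite mulrA; apply: mulr_ege1; first by rewrite -natrM ler1n muln_gt0 d_gt0.
by rewrite invf_ge1.
Qed.

Lemma sqrtr_le_of_sqr (a b : R) : 0 <= b -> a <= b ^+ 2 -> Num.sqrt a <= b.
Proof. by move=> b_ge0 ab; rewrite -[b]ger0_norm // -sqrtr_sqr ler_sqrt ?sqr_ge0. Qed.

Lemma ler_sqrtr_of_sqr (a b : R) : 0 <= a -> a ^+ 2 <= b -> a <= Num.sqrt b.
Proof.
move=> a_ge0 ab; rewrite -[a]ger0_norm // -sqrtr_sqr ler_sqrt //.
exact: le_trans (sqr_ge0 a) ab.
Qed.

Lemma beta_dominates (C2 X d Hn : R) : 0 < C2 -> 2 <= X -> 1 <= d -> 1 <= Hn ->
  C2 * d * Hn * Num.sqrt (ln (((2 * C2 + 4) ^+ 2 + 1) * X)) + Num.sqrt d * (1 + Hn)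
  <= (2 * C2 + 4) ^+ 2 * d * Hn * Num.sqrt (ln X).
Proof.
move=> C2_gt0 X_ge2 d_ge1 Hn_ge1; set u := 2 * C2 + 4; set s := Num.sqrt (ln X).
have lnX : 1 / 2 <= ln X by apply: le_trans ln2_ge_half _; rewrite ler_ln ?posrE //; lra.
have s2 : s ^+ 2 = ln X by rewrite sqr_sqrtr //; lra.
have s_ge : 1 / 2 <= s by apply: ler_sqrtr_of_sqr; lra.
have chi_le : Num.sqrt (ln ((u ^+ 2 + 1) * X)) <= 2 * u * s.
  apply: sqrtr_le_of_sqr; first by rewrite /u; nra.
  have u2_gt0 : 0 < u ^+ 2 + 1 by rewrite ltr_pwDr ?sqr_ge0.
  apply: le_trans (ln_mul_le _ _ u2_gt0 X_ge2) _.
  rewrite exprMn s2 ler_wpM2r //; first lra.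
  by rewrite /u; nra.
have sqrt_d : Num.sqrt d <= d by apply: sqrtr_le_of_sqr; nra.
have dHs_ge0 : 0 <= d * Hn * s by rewrite !mulr_ge0 //; lra.
have : C2 * d * Hn * Num.sqrt (ln ((u ^+ 2 + 1) * X)) <= C2 * d * Hn * (2 * u * s).
  by rewrite ler_wpM2l // !mulr_ge0 //; lra.
have : Num.sqrt d * (1 + Hn) <= d * Hn * (4 * s).
  apply: le_trans (_ : d * (Hn * 2) <= _).
    by apply: ler_pM; rewrite ?sqrtr_ge0 //; lra.
  by rewrite mulrA ler_wpM2l ?mulr_ge0 //; lra.
have -> : u ^+ 2 * d * Hn * s = C2 * d * Hn * (2 * u * s) + d * Hn * s * (4 * u).
  by rewrite /u; ring.
have : d * Hn * (4 * s) <= d * Hn * s * (4 * u).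
  rewrite (_ : _ * (4 * u) = d * Hn * (4 * s) * u); last by ring.
  by apply: ler_peMr; [rewrite !mulr_ge0 //; lra | rewrite /u; lra].
lra.
Qed.

End Constants.

Theorem lemma9 (R : realType) (C2 : R) (hC2 : 0 < C2) :
  exists C1 : R, 0 < C1 /\
  forall (dS : measure_display) (S : measurableType dS) (A : finType)
    (dim H K : nat) (phi : S -> A -> 'cV[R]_dim)
    (P : @kernel_t R dS S A) (mup mun : @fmeas_t R dS S dim)
    (rw ut : nat -> S -> A -> R) (x1 : S) (b gamma eta p : R)
    (xs : nat -> nat -> S) (acts : nat -> nat -> A)
    (pi : nat -> S -> A -> R),
  (2 <= #|A|)%N -> (0 < dim)%N -> (0 < H)%N -> (0 < K)%N ->
  (* linear MDP: features *)
  (forall x a, normv (phi x a) <= 1) ->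
  (forall a (i : 'I_dim), measurable_fun setT (fun x => phi x a i 0)) ->
  (* P_h(dx'|x,a) = <phi(x,a), mu_h(dx')> *)
  (forall h, (1 <= h <= H)%N -> forall x a (B : set S), measurable B ->
     P h x a B = (dotv (phi x a) (\col_i smeas mup mun h i B))%:E) ->
  (* || int f d mu_h || <= sqrt d sup |f| *)
  (forall h, (1 <= h <= H)%N -> forall (f : S -> R) (M : R),
     measurable_fun setT f -> (forall y, `|f y| <= M) ->
     normv (sint mup mun h f) <= Num.sqrt dim%:R * M) ->
  (* deterministic reward / utility in [0,1], linear in phi *)
  (forall h, (1 <= h <= H)%N -> forall x a,
     0 <= rw h x a <= 1 /\ 0 <= ut h x a <= 1) ->
  (forall x a, rw H.+1 x a = 0 /\ ut H.+1 x a = 0) ->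
  (forall h, (1 <= h <= H)%N -> exists th tg : 'cV[R]_dim,
     [/\ normv th <= Num.sqrt dim%:R, normv tg <= Num.sqrt dim%:R &
         forall x a, rw h x a = dotv (phi x a) th /\ ut h x a = dotv (phi x a) tg]) ->
  (* constraint threshold and Slater's condition *)
  0 < b <= H%:R ->
  0 < gamma ->
  (exists pib, is_policy H pib /\ b + gamma <= Vpol P pib ut H 1 x1) ->
  0 < eta -> 0 < p < 1 ->
  (* the data: episodes start from x1 *)
  (forall tau, xs tau 1%N = x1) ->
  (* the fixed comparison policy *)
  is_policy H pi ->
  let T : R := (K * H)%:R in
  let xi : R := 2 * H%:R / gamma in
  let iota : R := ln (4 * ln #|A|%:R * dim%:R * T / p) in
  let chi : R := ln (4 * (C1 + 1) * ln #|A|%:R * dim%:R * T / p) in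
  let beta : R := C1 * dim%:R * H%:R * Num.sqrt iota in
  let lam : R := 1 in
  let alpha : R := ln #|A|%:R * K%:R / (2 * (1 + xi + H%:R)) in
  event_E phi rw ut H lam beta alpha eta b xi x1 xs acts P K
    (C2 * dim%:R * H%:R * Num.sqrt chi) ->
  forall (x : S) (a : A) (k h : nat) (jr : bool),
    (1 <= k <= K)%N -> (1 <= h <= H)%N ->
  exists Delta : R,
    dotv (phi x a) (wk phi rw ut H lam beta alpha eta b xi x1 xs acts k h jr)
      - Qpol P pi (jfun rw ut jr) H h x a
    = PV P h (fun y => Vk phi rw ut H lam beta alpha eta b xi x1 xs acts k h.+1 jr y
                       - Vpol P pi (jfun rw ut jr) H h.+1 y) x a + Delta
    /\ `|Delta| <= beta * bonus phi lam xs acts k h x a.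
Proof.
exists ((2 * C2 + 4) ^+ 2); split; first by rewrite exprn_gt0 //; lra.
move=> dS S A dim H K phi P mup mun rw ut x1 b gamma eta p xs acts pi
  A_ge2 dim_gt0 H_gt0 K_gt0 _ phi_meas P_lin sint_le rw_ut_01 _ rw_ut_lin _ _ _ _
  /andP[p_gt0 p_lt1] _ pi_policy T xi iota chi beta lam alpha event x a k h jr kK hH.
(* Slater's condition, the dual step and the starting state only shape the softmax weights,
   over which the argument is uniform. *)
have X_ge2 : 2 <= 4 * ln #|A|%:R * dim%:R * T / p.
  by apply: confidence_ratio_ge2; rewrite ?muln_gt0 ?K_gt0 ?p_gt0 ?ltW.
have chiE : chi = ln (((2 * C2 + 4) ^+ 2 + 1) * (4 * ln #|A|%:R * dim%:R * T / p)).
  by rewrite /chi; congr ln; ring.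
have beta_ge : C2 * dim%:R * H%:R * Num.sqrt chi + Num.sqrt dim%:R * (1 + H%:R) <= beta.
  by rewrite chiE; apply: beta_dominates; rewrite ?ler1n.
exact (wk_sub_Qpol phi_meas P_lin rw_ut_01 rw_ut_lin sint_le event beta_ge
  pi_policy x a k h jr kK hH).
Qed.
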